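(* Let $(V,\|\cdot\|)$ be a normed plane and let $x,y\in V$ be distinct. Then $\mathrm{bis}(x,y)$ contains at most one line. If moreover $[xy]$ is parallel to some nondegenerate segment of the unit circle $S$ and $\mathrm{bis}(x,y)$ contains a line, then this line is the line through the centers of the two circles which contain $[xy]$ as a maximal segment.
   Context: A normed (Minkowski) plane $(V,\|\cdot\|)$ is a two-dimensional real vector space with a norm; $S=\{v:\|v\|=1\}$ is its unit circle. For distinct $x,y$, $\mathrm{bis}(x,y)=\{z\in V:\|z-x\|=\|z-y\|\}$. A circle with center $c$ and radius $\lambda>0$ is $c+\lambda S$. A maximal segment of a circle is a nondegenerate segment contained in the circle that is not properly contained in any other segment contained in that circle. Fact used in the statement: if $[xy]$ is parallel to a nondegenerate segment of $S$, then there are exactly two circles containing $[xy]$ as a maximal segment. *)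

(* classical reals. A normed plane is modelled as R^2 with an
   arbitrary norm (every 2-dim real normed space is linearly isometric to one). *)
From Stdlib Require Import Reals.
Open Scope R_scope.

Definition V : Type := (R * R)%type.
Definition vzero : V := (0, 0).
Definition vadd (u v : V) : V := (fst u + fst v, snd u + snd v).
Definition vsub (u v : V) : V := (fst u - fst v, snd u - snd v).
Definition vscal (a : R) (v : V) : V := (a * fst v, a * snd v).

Record is_norm (N : V -> R) : Prop := {
  norm_definite : forall v, N v = 0 -> v = vzero;
  norm_homog : forall (a : R) v, N (vscal a v) = Rabs a * N v;
  norm_triangle : forall u v, N (vadd u v) <= N u + N v
}.

Definition unit_circle (N : V -> R) (v : V) : Prop := N v = 1.

(* circle with center c and radius lam (lam > 0 is required separately) : c + lam S *)
Definition circle (N : V -> R) (c : V) (lam : R) (z : V) : Prop := N (vsub z c) = lam.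

Definition bis (N : V -> R) (x y : V) (z : V) : Prop := N (vsub z x) = N (vsub z y).

Definition segment (a b : V) (z : V) : Prop :=
  exists t, 0 <= t <= 1 /\ z = vadd (vscal (1 - t) a) (vscal t b).

(* line through p with direction d (d <> 0 required separately) *)
Definition line (p d : V) (z : V) : Prop := exists t : R, z = vadd p (vscal t d).

Definition subset (A B : V -> Prop) : Prop := forall z, A z -> B z.
Definition set_eq (A B : V -> Prop) : Prop := forall z, A z <-> B z.

Definition is_line (L : V -> Prop) : Prop :=
  exists p d, d <> vzero /\ set_eq L (line p d).

Definition nondeg_segment_in (C : V -> Prop) (a b : V) : Prop :=
  a <> b /\ subset (segment a b) C.

Definition maximal_segment (C : V -> Prop) (a b : V) : Prop :=
  nondeg_segment_in C a b /\
  forall a' b', subset (segment a' b') C ->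
    subset (segment a b) (segment a' b') -> set_eq (segment a b) (segment a' b').

Definition parallel (x y a b : V) : Prop :=
  exists k : R, vsub y x = vscal k (vsub b a).

(* Along any line parallel to [w := y - x], [s |-> N(A + s w)] is a convex
   function with linear growth; a point [x + A + t w] lies in bis(x,y) exactly
   when this function takes equal values at [t] and [t - 1].  A line of the
   bisector parallel to [w] would make it 1-periodic, which linear growth
   forbids; so every line of the bisector crosses the line [xy], and it can only
   do so at the midpoint.  If two such lines through the midpoint were not
   parallel, then near the midpoint they would be joined by short segments
   parallel to [w] whose both ends are in the bisector; convexity makes the
   function constant on a whole interval of length more than 1, which fails at
   the midpoint for a short enough segment.  The same convexity argument shows
   that a point [c + s w] of the bisector, [c] the center of a circle with
   maximal segment [xy], would extend [xy] inside that circle unless [s = 0];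
   hence both centers lie on the line of the bisector. *)
From Stdlib Require Import Reals Lra Psatz.
Open Scope R_scope.

Lemma vec_ext (u v : V) : fst u = fst v -> snd u = snd v -> u = v.
Proof. destruct u, v; simpl; intros; subst; reflexivity. Qed.

Ltac vec_field := apply vec_ext; unfold vadd, vsub, vscal, vzero; simpl; field.

Lemma vsub_neq0 (x y : V) : x <> y -> vsub y x <> vzero.
Proof.
  intros Hxy E; apply Hxy; destruct x, y; unfold vsub, vzero in E; simpl in E.
  injection E; intros; f_equal; lra.
Qed.

Lemma vadd_vscal_inj (x w : V) (a b : R) :
  w <> vzero -> vadd x (vscal a w) = vadd x (vscal b w) -> a = b.
Proof.
  destruct x as [x1 x2], w as [w1 w2]; unfold vadd, vscal, vzero; simpl.
  intros Hw E; injection E; intros E2 E1.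
  destruct (Req_dec a b) as [|Hab]; [assumption|exfalso; apply Hw].
  f_equal; apply (Rmult_eq_reg_l (a - b)); lra.
Qed.

Definition cross (u v : V) : R := fst u * snd v - snd u * fst v.

Lemma cross_eq0_scal (d e : V) :
  e <> vzero -> cross d e = 0 -> exists k, d = vscal k e.
Proof.
  destruct d as [d1 d2], e as [e1 e2]; unfold cross; simpl; intros He Hc.
  assert (Hpos : 0 < e1 * e1 + e2 * e2).
  { destruct (Req_dec e1 0), (Req_dec e2 0); [|nra..].
    subst; exfalso; apply He; reflexivity. }
  exists ((d1 * e1 + d2 * e2) / (e1 * e1 + e2 * e2)).
  assert (H1 : d1 * (e1 * e1 + e2 * e2) - (d1 * e1 + d2 * e2) * e1
               = e2 * (d1 * e2 - d2 * e1)) by ring.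
  assert (H2 : d2 * (e1 * e1 + e2 * e2) - (d1 * e1 + d2 * e2) * e2
               = - e1 * (d1 * e2 - d2 * e1)) by ring.
  rewrite Hc in H1, H2.
  apply vec_ext; unfold vscal; simpl; field_simplify_eq; lra.
Qed.

Lemma lines_meet (p d q e : V) :
  cross d e <> 0 -> exists t s, vadd p (vscal t d) = vadd q (vscal s e).
Proof.
  intros Hc.
  exists (cross (vsub q p) e / cross d e), (cross (vsub q p) d / cross d e).
  destruct p, d, q, e; unfold cross, vsub, vadd, vscal in *; simpl in *.
  apply vec_ext; simpl; field; assumption.
Qed.

Lemma line_eq_of_parallel (p d p' e q : V) (k : R) :
  line p d q -> line p' e q -> d = vscal k e -> k <> 0 ->
  set_eq (line p d) (line p' e).
Proof.
  intros [t1 E1] [t2 E2] Hk Hk0; subst q d.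
  assert (Ep : p' = vadd (vadd p (vscal t1 (vscal k e))) (vscal (- t2) e))
    by (rewrite E2; vec_field).
  subst p'; intro z; split.
  - intros [t ->]; exists (t2 + (t - t1) * k); vec_field.
  - intros [t ->]; exists (t1 + (t - t2) / k); vec_field; assumption.
Qed.

Lemma line_recenter (p d q : V) : line p d q -> set_eq (line p d) (line q d).
Proof.
  intros Hq; apply (line_eq_of_parallel p d q d q 1); try assumption.
  - exists 0; vec_field.
  - vec_field.
  - lra.
Qed.

Lemma line_eq_of_two_points (p d c1 c2 : V) :
  line p d c1 -> line p d c2 -> c1 <> c2 -> set_eq (line p d) (line c1 (vsub c2 c1)).
Proof.
  intros [t1 E1] [t2 E2] Hne.
  assert (Ht : t2 - t1 <> 0) by (intro; apply Hne; subst; f_equal; f_equal; lra).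
  intro z; split.
  - intros [t ->]; exists ((t - t1) / (t2 - t1)); subst; vec_field; assumption.
  - intros [u ->]; exists (t1 + u * (t2 - t1)); subst; vec_field.
Qed.

Lemma segment_iff (x y z : V) :
  segment x y z <-> exists t, 0 <= t <= 1 /\ z = vadd x (vscal t (vsub y x)).
Proof.
  split; intros [t [Ht ->]]; exists t; split; auto; vec_field.
Qed.

Lemma maximal_segment_extend (C : V -> Prop) (x y : V) (a b : R) :
  maximal_segment C x y -> a <= 0 -> 1 <= b ->
  (forall r, a <= r <= b -> C (vadd x (vscal r (vsub y x)))) ->
  a = 0 /\ b = 1.
Proof.
  intros [[Hxy _] Hmax] Ha Hb HC.
  set (w := vsub y x) in *.
  set (P := fun r => vadd x (vscal r w)).
  assert (Hseg : forall t, 0 <= t <= 1 ->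
                 vadd (vscal (1 - t) (P a)) (vscal t (P b)) = P ((1 - t) * a + t * b))
    by (intros t _; unfold P; vec_field).
  assert (Hsub : subset (segment (P a) (P b)) C).
  { intros z [t [Ht ->]]; rewrite Hseg by assumption; apply HC; nra. }
  assert (Hxy_sub : subset (segment x y) (segment (P a) (P b))).
  { intros z Hz; apply segment_iff in Hz; destruct Hz as [t [Ht ->]].
    set (t' := (t - a) / (b - a)).
    assert (Ht' : t' * (b - a) = t - a) by (unfold t'; field; lra).
    assert (Ht'01 : 0 <= t' <= 1) by (split; nra).
    exists t'; split; [assumption|].
    rewrite Hseg by assumption.
    unfold P; f_equal; f_equal; nra. }
  assert (Hend : forall r, segment (P a) (P b) (P r) -> 0 <= r <= 1).
  { intros r Hr; apply (Hmax _ _ Hsub Hxy_sub), segment_iff in Hr.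
    destruct Hr as [t [Ht E]].
    apply vadd_vscal_inj in E; [subst; assumption|apply vsub_neq0; assumption]. }
  assert (0 <= a) by (apply Hend; exists 0; split; [lra|unfold P; vec_field]).
  assert (b <= 1) by (apply Hend; exists 1; split; [lra|unfold P; vec_field]).
  lra.
Qed.

Definition convex (f : R -> R) : Prop :=
  forall p q r, p < q < r -> (r - p) * f q <= (r - q) * f p + (q - p) * f r.

Section Convex.
Variable f : R -> R.
Hypothesis hf : convex f.

Lemma convex_le_inside (p q s K : R) :
  p <= s <= q -> f p <= K -> f q <= K -> f s <= K.
Proof.
  intros Hs Hp Hq.
  destruct (Req_dec s p) as [->|]; [assumption|].
  destruct (Req_dec s q) as [->|]; [assumption|].
  pose proof (hf p s q ltac:(lra)).
  apply (Rmult_le_reg_l (q - p)); nra.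
Qed.

Lemma convex_ge_outside (p q s : R) :
  p < q -> f p = f q -> s <= p \/ q <= s -> f p <= f s.
Proof.
  intros Hpq Hf [Hs|Hs].
  - destruct (Req_dec s p) as [->|]; [lra|].
    pose proof (hf s p q ltac:(lra)).
    apply (Rmult_le_reg_l (q - p)); nra.
  - destruct (Req_dec s q) as [->|]; [lra|].
    pose proof (hf p q s ltac:(lra)).
    apply (Rmult_le_reg_l (q - p)); nra.
Qed.

Lemma convex_flat (a b s : R) :
  a < b -> f a = f (a + 1) -> f b = f (b + 1) -> a <= s <= b + 1 -> f s = f a.
Proof.
  intros Hab Ha Hb Hs.
  assert (Hfab : f a = f b).
  { destruct (Rlt_le_dec b (a + 1)).
    - assert (f b <= f a) by (apply (convex_le_inside a (a + 1)); lra).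
      assert (f (a + 1) <= f b) by (apply (convex_le_inside b (b + 1)); lra).
      lra.
    - assert (f a <= f b) by (apply (convex_ge_outside a (a + 1)); lra).
      assert (f b <= f (a + 1)) by (apply (convex_ge_outside b (b + 1)); lra).
      lra. }
  apply Rle_antisym.
  - apply (convex_le_inside a (b + 1)); lra.
  - destruct (Rle_lt_dec s b).
    + rewrite Hfab; apply (convex_ge_outside b (b + 1)); lra.
    + apply (convex_ge_outside a b); lra.
Qed.
End Convex.

Section Norm.
Variable N : V -> R.
Hypothesis hN : is_norm N.

Lemma norm_zero : N vzero = 0.
Proof.
  replace vzero with (vscal 0 vzero) by vec_field.
  rewrite (norm_homog _ hN), Rabs_R0; ring.
Qed.

Lemma norm_opp (v : V) : N (vscal (-1) v) = N v.
Proof. rewrite (norm_homog _ hN), Rabs_left by lra; ring. Qed.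

Lemma norm_ge0 (v : V) : 0 <= N v.
Proof.
  pose proof (norm_triangle _ hN v (vscal (-1) v)) as H.
  replace (vadd v (vscal (-1) v)) with vzero in H by vec_field.
  rewrite norm_opp, norm_zero in H; lra.
Qed.

Lemma norm_gt0 (v : V) : v <> vzero -> 0 < N v.
Proof.
  intros Hv; destruct (norm_ge0 v) as [|E]; [assumption|].
  exfalso; apply Hv, (norm_definite _ hN); auto.
Qed.

Lemma norm_affine_ge (A B : V) (s : R) :
  Rabs s * N B - N A <= N (vadd A (vscal s B)).
Proof.
  pose proof (norm_triangle _ hN (vadd A (vscal s B)) (vscal (-1) A)) as H.
  replace (vadd (vadd A (vscal s B)) (vscal (-1) A)) with (vscal s B) in H
    by vec_field.
  rewrite norm_opp, (norm_homog _ hN) in H; lra.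
Qed.

Lemma norm_affine_convex (A B : V) : convex (fun s => N (vadd A (vscal s B))).
Proof.
  intros p q r Hpqr.
  assert (E : vscal (r - p) (vadd A (vscal q B))
              = vadd (vscal (r - q) (vadd A (vscal p B)))
                     (vscal (q - p) (vadd A (vscal r B)))) by vec_field.
  pose proof (norm_homog _ hN (r - p) (vadd A (vscal q B))) as H.
  rewrite E, Rabs_right in H by lra.
  pose proof (norm_triangle _ hN (vscal (r - q) (vadd A (vscal p B)))
                                 (vscal (q - p) (vadd A (vscal r B)))) as T.
  rewrite !(norm_homog _ hN), (Rabs_right (r - q)), (Rabs_right (q - p)) in T
    by lra.
  lra.
Qed.

Lemma norm_affine_not_periodic (A B : V) :
  B <> vzero -> ~ (forall s, N (vadd A (vscal (s + 1) B)) = N (vadd A (vscal s B))).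
Proof.
  intros HB Hper.
  assert (Hnat : forall n, N (vadd A (vscal (INR n) B)) = N A).
  { induction n as [|n IH].
    - simpl; f_equal; vec_field.
    - rewrite S_INR, Hper, IH; reflexivity. }
  destruct (INR_archimed (N B) (2 * N A) (norm_gt0 B HB)) as [n Hn].
  pose proof (norm_affine_ge A B (INR n)) as Hge.
  rewrite Hnat, Rabs_right in Hge by (apply Rle_ge, pos_INR).
  lra.
Qed.

Section Bisector.
Variables x y : V.
Hypothesis hxy : x <> y.

Let w := vsub y x.

Definition midpoint : V := vadd x (vscal (1/2) w).

Lemma bis_affine (A : V) (t : R) :
  bis N x y (vadd x (vadd A (vscal (t + 1) w))) ->
  N (vadd A (vscal t w)) = N (vadd A (vscal (t + 1) w)).
Proof.
  unfold bis.
  replace (vsub (vadd x (vadd A (vscal (t + 1) w))) x) with (vadd A (vscal (t + 1) w))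
    by (unfold w; vec_field).
  replace (vsub (vadd x (vadd A (vscal (t + 1) w))) y) with (vadd A (vscal t w))
    by (unfold w; vec_field).
  intros H; symmetry; exact H.
Qed.

Lemma bis_line_not_parallel (p d : V) :
  d <> vzero -> subset (line p d) (bis N x y) -> cross d w <> 0.
Proof.
  intros Hd Hs Hc.
  destruct (cross_eq0_scal d w (vsub_neq0 x y hxy) Hc) as [k ->].
  assert (Hk : k <> 0) by (intros ->; apply Hd; vec_field).
  apply (norm_affine_not_periodic (vsub p x) w (vsub_neq0 x y hxy)); intro s.
  symmetry; apply bis_affine.
  replace (vadd x (vadd (vsub p x) (vscal (s + 1) w)))
    with (vadd p (vscal ((s + 1) / k) (vscal k w))) by (vec_field; assumption).
  apply Hs; eexists; reflexivity.
Qed.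

Lemma bis_line_midpoint (p d : V) :
  d <> vzero -> subset (line p d) (bis N x y) -> line p d midpoint.
Proof.
  intros Hd Hs.
  destruct (lines_meet p d x w (bis_line_not_parallel p d Hd Hs)) as [t [s Ht]].
  assert (Hb : N (vadd vzero (vscal (s - 1) w)) = N (vadd vzero (vscal (s - 1 + 1) w))).
  { apply bis_affine.
    replace (vadd x (vadd vzero (vscal (s - 1 + 1) w))) with (vadd p (vscal t d))
      by (rewrite Ht; vec_field).
    apply Hs; exists t; reflexivity. }
  replace (vadd vzero (vscal (s - 1) w)) with (vscal (s - 1) w) in Hb by vec_field.
  replace (vadd vzero (vscal (s - 1 + 1) w)) with (vscal s w) in Hb by vec_field.
  rewrite !(norm_homog _ hN) in Hb.
  pose proof (norm_gt0 w (vsub_neq0 x y hxy)).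
  assert (Habs : Rabs s = Rabs (s - 1)) by (apply (Rmult_eq_reg_r (N w)); lra).
  assert (Hs2 : s = 1/2) by (revert Habs; unfold Rabs; repeat destruct Rcase_abs; lra).
  exists t; unfold midpoint; rewrite Ht, Hs2; reflexivity.
Qed.

Lemma bis_lines_parallel (d1 d2 : V) :
  d1 <> vzero -> d2 <> vzero ->
  subset (line midpoint d1) (bis N x y) -> subset (line midpoint d2) (bis N x y) ->
  cross d1 d2 = 0.
Proof.
  intros Hd1 Hd2 Hs1 Hs2.
  destruct (Req_dec (cross d1 d2) 0) as [|Hc]; [assumption|exfalso].
  destruct (lines_meet w d1 vzero d2 Hc) as [t [s Hts]].
  pose proof (norm_gt0 w (vsub_neq0 x y hxy)) as Hw.
  pose proof (norm_ge0 (vscal t d1)) as Ht.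
  (* shrink the triangle [midpoint, midpoint + t d1, midpoint + s d2] by [eps]
     until the side along [d1] is shorter than [N w / 4] *)
  set (eps := N w / (4 * (N (vscal t d1) + N w))).
  assert (Heps : 0 < eps) by (apply Rdiv_lt_0_compat; lra).
  assert (Heps4 : eps * (4 * (N (vscal t d1) + N w)) = N w) by (unfold eps; field; lra).
  set (A := vscal (eps * t) d1).
  assert (HA : 4 * N A < N w).
  { replace A with (vscal eps (vscal t d1)) by (unfold A; vec_field).
    rewrite (norm_homog _ hN), Rabs_right by lra.
    nra. }
  set (phi := fun r => N (vadd A (vscal r w))).
  assert (Hphi1 : phi (-1/2) = phi (-1/2 + 1)).
  { apply bis_affine.
    replace (vadd x (vadd A (vscal (-1/2 + 1) w)))
      with (vadd midpoint (vscal (eps * t) d1)) by (unfold midpoint, A; vec_field).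
    apply Hs1; eexists; reflexivity. }
  assert (Hphi2 : phi (eps - 1/2) = phi (eps - 1/2 + 1)).
  { apply bis_affine.
    replace (vadd x (vadd A (vscal (eps - 1/2 + 1) w)))
      with (vadd midpoint (vscal (eps * s) d2)).
    - apply Hs2; eexists; reflexivity.
    - replace (vscal (eps * s) d2) with (vscal eps (vadd vzero (vscal s d2)))
        by vec_field.
      rewrite <- Hts; unfold midpoint, A; vec_field. }
  assert (Hflat : phi 0 = phi (-1/2)).
  { apply (convex_flat phi (norm_affine_convex A w) (-1/2) (eps - 1/2)); lra. }
  pose proof (norm_affine_ge A w (-1/2)) as Hge.
  rewrite Rabs_left in Hge by lra.
  unfold phi in Hflat.
  replace (vadd A (vscal 0 w)) with A in Hflat by vec_field.
  lra.
Qed.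

Lemma bis_line_unique (p1 d1 p2 d2 : V) :
  d1 <> vzero -> d2 <> vzero ->
  subset (line p1 d1) (bis N x y) -> subset (line p2 d2) (bis N x y) ->
  set_eq (line p1 d1) (line p2 d2).
Proof.
  intros Hd1 Hd2 Hs1 Hs2.
  pose proof (bis_line_midpoint p1 d1 Hd1 Hs1) as M1.
  pose proof (bis_line_midpoint p2 d2 Hd2 Hs2) as M2.
  assert (Hc : cross d1 d2 = 0).
  { apply bis_lines_parallel; try assumption.
    - intros z Hz; apply Hs1, (line_recenter p1 d1 midpoint M1), Hz.
    - intros z Hz; apply Hs2, (line_recenter p2 d2 midpoint M2), Hz. }
  destruct (cross_eq0_scal d1 d2 Hd2 Hc) as [k Hk].
  apply (line_eq_of_parallel p1 d1 p2 d2 midpoint k M1 M2 Hk).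
  intros ->; apply Hd1; rewrite Hk; vec_field.
Qed.

Lemma bis_center_eq (c : V) (l s : R) :
  maximal_segment (circle N c l) x y -> bis N x y (vadd c (vscal s w)) -> s = 0.
Proof.
  intros M Hb.
  set (g := fun r => N (vadd (vsub x c) (vscal r w))).
  assert (Hg : convex g) by apply norm_affine_convex.
  assert (Hcirc : forall r, circle N c l (vadd x (vscal r w)) <-> g r = l).
  { intros r; unfold circle, g.
    replace (vsub (vadd x (vscal r w)) c) with (vadd (vsub x c) (vscal r w))
      by vec_field.
    reflexivity. }
  assert (Hxy : forall r, 0 <= r <= 1 -> g r = l).
  { intros r Hr; apply Hcirc, (proj2 (proj1 M)), segment_iff; exists r; auto. }
  assert (Hper : g (- s) = g (- s + 1)).
  { unfold bis in Hb; unfold g.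
    replace (vsub (vadd c (vscal s w)) x)
      with (vscal (-1) (vadd (vsub x c) (vscal (- s) w))) in Hb by (unfold w; vec_field).
    replace (vsub (vadd c (vscal s w)) y)
      with (vscal (-1) (vadd (vsub x c) (vscal (- s + 1) w))) in Hb by (unfold w; vec_field).
    rewrite !norm_opp in Hb; exact Hb. }
  assert (H01 : g 0 = g (0 + 1)) by (rewrite !Hxy; lra).
  destruct (Rtotal_order s 0) as [Hs|[Hs|Hs]]; [exfalso| assumption |exfalso].
  - assert (Hext : forall r, 0 <= r <= - s + 1 -> g r = l).
    { intros r Hr; rewrite (convex_flat g Hg 0 (- s) r) by lra; apply Hxy; lra. }
    destruct (maximal_segment_extend _ x y 0 (- s + 1) M) as [_ E]; try lra.
    intros r Hr; apply Hcirc, Hext, Hr.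
  - assert (Hext : forall r, - s <= r <= 1 -> g r = l).
    { intros r Hr; rewrite (convex_flat g Hg (- s) 0 r) by lra.
      rewrite <- (convex_flat g Hg (- s) 0 0) by lra; apply Hxy; lra. }
    destruct (maximal_segment_extend _ x y (- s) 1 M) as [E _]; try lra.
    intros r Hr; apply Hcirc, Hext, Hr.
Qed.

Lemma bis_line_center (p d c : V) (l : R) :
  d <> vzero -> subset (line p d) (bis N x y) ->
  maximal_segment (circle N c l) x y -> line p d c.
Proof.
  intros Hd Hs M.
  pose proof (bis_line_not_parallel p d Hd Hs) as Hc.
  assert (Hc' : cross w d <> 0) by (unfold cross in *; lra).
  destruct (lines_meet c w p d Hc') as [s [t E]].
  assert (Hs0 : s = 0).
  { apply (bis_center_eq c l s M); rewrite E; apply Hs; exists t; reflexivity. }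
  exists t; rewrite <- E, Hs0; vec_field.
Qed.
End Bisector.
End Norm.

Theorem corollary2p1 (N : V -> R) (hN : is_norm N) (x y : V) (hxy : x <> y) :
  (forall L1 L2 : V -> Prop, is_line L1 -> is_line L2 ->
     subset L1 (bis N x y) -> subset L2 (bis N x y) -> set_eq L1 L2)
  /\
  ((exists a b, nondeg_segment_in (unit_circle N) a b /\ parallel x y a b) ->
   forall L : V -> Prop, is_line L -> subset L (bis N x y) ->
   forall (c1 c2 : V) (l1 l2 : R), 0 < l1 -> 0 < l2 -> c1 <> c2 ->
     maximal_segment (circle N c1 l1) x y ->
     maximal_segment (circle N c2 l2) x y ->
     set_eq L (line c1 (vsub c2 c1))).
Proof.
  split.
  - intros L1 L2 [p1 [d1 [Hd1 E1]]] [p2 [d2 [Hd2 E2]]] S1 S2 z.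
    rewrite (E1 z), (E2 z).
    apply (bis_line_unique N hN x y hxy p1 d1 p2 d2 Hd1 Hd2).
    + intros u Hu; apply S1, E1, Hu.
    + intros u Hu; apply S2, E2, Hu.
  (* The parallelism hypothesis only guarantees that two such circles exist;
     both centers lie on the line whatever the circles are. *)
  - intros _ L [p [d [Hd E]]] S c1 c2 l1 l2 _ _ Hne M1 M2 z.
    assert (Hs : subset (line p d) (bis N x y)) by (intros u Hu; apply S, E, Hu).
    rewrite (E z).
    apply line_eq_of_two_points; [| |exact Hne].
    + apply (bis_line_center N hN x y hxy p d c1 l1 Hd Hs M1).
    + apply (bis_line_center N hN x y hxy p d c2 l2 Hd Hs M2).
Qed.
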